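(* Let $k\ge1$ and $n\ge0$ be integers. Every uniformly $k$-dense flag complex with at least $n(k+1)+1$ vertices is $(n,k)$-grounded.
   Context: A flag complex $X$ is uniformly $k$-dense if every vertex of $X$ is adjacent to all but at most $k$ other vertices. A simplex $\Delta$ of $X$ is a $k$-ground for $X$ if every vertex of $X$ is adjacent to all but at most $k$ vertices of $\Delta$; $X$ is $(n,k)$-grounded if it contains an $n$-simplex that is a $k$-ground for $X$. *)

From mathcomp Require Import all_boot.
Set Implicit Arguments. Unset Strict Implicit. Unset Printing Implicit Defensive.

(* A flag complex is determined by its 1-skeleton: a finite simple graph on
   the vertex type T, given by a symmetric irreflexive adjacency relation adj.
   Its simplices are the nonempty cliques; an n-simplex is a clique with
   exactly n+1 vertices. *)

Definition simple_graph (T : finType) (adj : rel T) : Prop :=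
  symmetric adj /\ irreflexive adj.

Definition is_clique (T : finType) (adj : rel T) (D : {set T}) : Prop :=
  forall x y, x \in D -> y \in D -> x != y -> adj x y.

Definition is_simplex (T : finType) (adj : rel T) (n : nat) (D : {set T}) : Prop :=
  is_clique adj D /\ #|D| = n.+1.

Definition uniformly_dense (T : finType) (adj : rel T) (k : nat) : Prop :=
  forall v : T, #|[set w | (w != v) && ~~ adj v w]| <= k.

Definition is_ground (T : finType) (adj : rel T) (k : nat) (D : {set T}) : Prop :=
  forall v : T, #|[set w in D | ~~ adj v w]| <= k.

Definition grounded (T : finType) (adj : rel T) (n k : nat) : Prop :=
  exists D : {set T}, is_simplex adj n D /\ is_ground adj k D.

From mathcomp Require Import all_boot.
From mathcomp Require Import zify.

(* Every clique D with n+1 vertices is already a k-ground: a vertex of D misses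
   only itself in D, and a vertex outside D misses at most k vertices anywhere.
   Such a clique is found greedily: pick any vertex x of the current pool S and
   shrink S to the neighbours of x in S; this discards at most k+1 vertices
   (x and its at most k non-neighbours), so a pool of n(k+1)+1 vertices lasts
   for n+1 picks. *)

Section DenseFlagComplex.

Variables (T : finType) (adj : rel T) (k : nat).

Definition neighbours (x : T) : {set T} := [set w | adj x w].

Lemma clique_is_ground (D : {set T}) :
  1 <= k -> uniformly_dense adj k -> is_clique adj D -> is_ground adj k D.
Proof.
move=> k_gt0 dense clD v; case: (boolP (v \in D)) => vD.
  apply: leq_trans k_gt0; rewrite -(cards1 v); apply: subset_leq_card.
  apply/subsetP=> w; rewrite !inE => /andP[wD]; apply: contraR => wv.
  by rewrite clD // eq_sym.
apply: leq_trans (dense v); apply: subset_leq_card.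
apply/subsetP=> w; rewrite !inE => /andP[wD ->]; rewrite andbT.
by apply: contraNneq vD => <-.
Qed.

Lemma clique_setU1 (x : T) (D : {set T}) :
  symmetric adj -> is_clique adj D -> {in D, forall y, adj x y} ->
  is_clique adj (x |: D).
Proof.
move=> sym clD adjx a b; rewrite !in_setU1.
case/orP=> [/eqP->|aD] /orP[/eqP->|bD]; rewrite ?eqxx // => ab.
- exact: adjx.
- by rewrite sym adjx.
- exact: clD.
Qed.

Lemma card_le_neighbours (x : T) (S : {set T}) :
  uniformly_dense adj k -> #|S| <= #|S :&: neighbours x| + k.+1.
Proof.
move=> dense; rewrite -(cardsID (neighbours x) S) leq_add2l.
have sub : S :\: neighbours x \subset x |: [set w | (w != x) && ~~ adj x w].
  apply/subsetP=> w; rewrite !inE => /andP[nxw _].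
  by rewrite nxw andbT orbN.
apply: leq_trans (subset_leq_card sub) _.
by rewrite cardsU1 -add1n leq_add ?leq_b1 ?dense.
Qed.

Lemma dense_clique_exists (n : nat) (S : {set T}) :
  simple_graph adj -> uniformly_dense adj k -> n * k.+1 + 1 <= #|S| ->
  exists D : {set T}, D \subset S /\ is_simplex adj n D.
Proof.
move=> [sym irr] dense; elim: n S => [|n IH] S hS.
  have /card_gt0P[x xS] : 0 < #|S| by lia.
  exists [set x]; split; first by rewrite sub1set.
  split; last by rewrite cards1.
  by move=> a b; rewrite !in_set1 => /eqP-> /eqP->; rewrite eqxx.
have /card_gt0P[x xS] : 0 < #|S| by lia.
have hS' : n * k.+1 + 1 <= #|S :&: neighbours x|.
  by have := card_le_neighbours x S dense; rewrite mulSn in hS; lia.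
have [D [DS [clD cardD]]] := IH _ hS'.
have adjx : {in D, forall y, adj x y}.
  by move=> y /(subsetP DS); rewrite !inE => /andP[].
have xD : x \notin D by apply: contraFN (irr x) => /adjx.
exists (x |: D); split.
  by rewrite subUset sub1set xS (subset_trans DS) ?subsetIl.
by split; [apply: clique_setU1 | rewrite cardsU1 xD cardD].
Qed.

End DenseFlagComplex.

Theorem lemma4p12 (k n : nat) (T : finType) (adj : rel T) :
  1 <= k -> simple_graph adj -> uniformly_dense adj k ->
  n * k.+1 + 1 <= #|T| -> grounded adj n k.
Proof.
move=> k_gt0 sg dense hT.
have [|D [_ [clD cardD]]] := @dense_clique_exists _ _ k n [set: T] sg dense.
  by rewrite cardsT.
by exists D; split; [split | apply: clique_is_ground].
Qed.
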